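(* Let $\mathbb{X}=\langle X,\le\rangle$ be a poset such that ${\downarrow}x=\{y\in X: y\le x\}$ is cofinite in $X$ for every $x\in X$. Then the root compactification of $\mathbb{X}$ is an Esakia space.
   Context: The root compactification of a poset $\mathbb{X}$ is the ordered topological space obtained by adding a new element $\bot$ below all elements of $X$ (giving the poset $X\cup\{\bot\}$) and declaring a subset $U\subseteq X\cup\{\bot\}$ open iff either $\bot\notin U$ or $U$ is cofinite. An Esakia space is a compact ordered topological space $\langle X,\tau,\le\rangle$ such that ${\downarrow}U$ is clopen for every clopen $U$, and such that whenever $x\not\le y$ there is a clopen upset containing $x$ but not $y$. *)

From Stdlib Require Import List.

Definition set (T : Type) := T -> Prop.

Definition finite_set {T : Type} (A : set T) : Prop :=
  exists l : list T, forall x, A x -> In x l.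
Definition cofinite {T : Type} (A : set T) : Prop :=
  finite_set (fun x => ~ A x).

Definition is_partial_order {T : Type} (le : T -> T -> Prop) : Prop :=
  (forall x, le x x) /\
  (forall x y, le x y -> le y x -> x = y) /\
  (forall x y z, le x y -> le y z -> le x z).

Definition downset {T : Type} (le : T -> T -> Prop) (x : T) : set T :=
  fun y => le y x.

Definition is_topology {T : Type} (open : set T -> Prop) : Prop :=
  open (fun _ => True) /\
  (forall F : set T -> Prop, (forall U, F U -> open U) ->
     open (fun x => exists U, F U /\ U x)) /\
  (forall U V, open U -> open V -> open (fun x => U x /\ V x)).

Definition compact_space {T : Type} (open : set T -> Prop) : Prop :=
  forall C : set T -> Prop,
    (forall U, C U -> open U) ->
    (forall x, exists U, C U /\ U x) ->
    exists l : list (set T),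
      (forall U, In U l -> C U) /\ (forall x, exists U, In U l /\ U x).

Definition clopen {T : Type} (open : set T -> Prop) (U : set T) : Prop :=
  open U /\ open (fun x => ~ U x).

Definition is_upset {T : Type} (le : T -> T -> Prop) (U : set T) : Prop :=
  forall x y, U x -> le x y -> U y.

Definition down {T : Type} (le : T -> T -> Prop) (U : set T) : set T :=
  fun y => exists x, U x /\ le y x.

Definition esakia_space {T : Type} (open : set T -> Prop)
    (le : T -> T -> Prop) : Prop :=
  is_topology open /\ is_partial_order le /\ compact_space open /\
  (forall U, clopen open U -> clopen open (down le U)) /\
  (forall x y, ~ le x y ->
     exists U, clopen open U /\ is_upset le U /\ U x /\ ~ U y).

(** Root compactification: carrier [option X], [None] is the new bottom. *)
Definition root_le {X : Type} (le : X -> X -> Prop) (a b : option X) : Prop :=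
  match a, b with
  | None, _ => True
  | Some _, None => False
  | Some x, Some y => le x y
  end.

Definition root_open {X : Type} (U : set (option X)) : Prop :=
  ~ U None \/ cofinite U.

(* Every open set containing the root is cofinite, so an open cover is finite up
   to the member containing the root: the space is compact.  A nonempty set U
   has the root in its downset, and that downset is cofinite (it contains some
   ↓x, or U itself when the root is in U), so it is clopen.  For x ≰ y the
   principal upset ↑x separates x from y: it misses the root, and it is finite
   because, by antisymmetry, ↑x \ {x} lies in the finite complement of ↓x. *)
From Stdlib Require Import List Classical.

Lemma finite_set_mono {T : Type} (A B : set T) :
  (forall x, A x -> B x) -> finite_set B -> finite_set A.
Proof.
  intros AB [l Hl]. exists l. intros x Ax. apply Hl, AB, Ax.
Qed.

Lemma finite_set_union {T : Type} (A B : set T) :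
  finite_set A -> finite_set B -> finite_set (fun x => A x \/ B x).
Proof.
  intros [l HA] [m HB]. exists (l ++ m).
  intros x [Ax | Bx]; apply in_or_app; auto.
Qed.

Lemma cofinite_mono {T : Type} (A B : set T) :
  (forall x, A x -> B x) -> cofinite A -> cofinite B.
Proof.
  intros AB. apply finite_set_mono. intros x nBx Ax. apply nBx, AB, Ax.
Qed.

Lemma cofinite_and {T : Type} (A B : set T) :
  cofinite A -> cofinite B -> cofinite (fun x => A x /\ B x).
Proof.
  intros HA HB. apply (finite_set_mono _ (fun x => ~ A x \/ ~ B x)).
  - intros x nAB. apply NNPP. intros H. apply nAB.
    split; apply NNPP; intros ?; apply H; auto.
  - apply finite_set_union; assumption.
Qed.

Lemma finite_set_subcover {T : Type} (C : set T -> Prop) (l : list T) :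
  (forall x, exists U, C U /\ U x) ->
  exists m : list (set T), (forall U, In U m -> C U) /\
    (forall x, In x l -> exists U, In U m /\ U x).
Proof.
  intros cover. induction l as [|a l [m [Cm cover_l]]].
  - exists nil. split; intros ? [].
  - destruct (cover a) as [Ua [CUa Ua_a]].
    exists (Ua :: m). split.
    + intros U [<- | HU]; auto.
    + intros x [<- | Hx].
      * exists Ua. split; [left|]; auto.
      * destruct (cover_l x Hx) as [U [HU Ux]]. exists U. split; [right|]; auto.
Qed.

Section RootCompactification.

Variables (X : Type) (le : X -> X -> Prop).

Lemma root_open_topology : is_topology (@root_open X).
Proof.
  split; [|split].
  - right. exists nil. intros x nx. exfalso. apply nx. exact I.
  - intros F openF. destruct (classic (exists U, F U /\ U None)) as [[U [FU UN]] | nN].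
    + right. destruct (openF U FU) as [nUN | cofU]; [contradiction|].
      apply (cofinite_mono U); [|assumption]. intros x Ux. exists U. auto.
    + left. exact nN.
  - intros U V [nUN | cofU] [nVN | cofV].
    + left. intros [? ?]; auto.
    + left. intros [? ?]; auto.
    + left. intros [? ?]; auto.
    + right. apply cofinite_and; assumption.
Qed.

Lemma root_le_partial_order :
  is_partial_order le -> is_partial_order (root_le le).
Proof.
  intros [refl [antisym trans]]. split; [|split].
  - intros [x|]; simpl; auto.
  - intros [x|] [y|]; simpl; intros Hxy Hyx; try contradiction; auto.
    f_equal. auto.
  - intros [x|] [y|] [z|]; simpl; intros Hxy Hyz; try contradiction; eauto.
Qed.

Lemma root_open_compact : compact_space (@root_open X).
Proof.
  intros C openC cover. destruct (cover None) as [U0 [CU0 U0N]].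
  destruct (openC U0 CU0) as [nU0N | [l Hl]]; [contradiction|].
  destruct (finite_set_subcover C l cover) as [m [Cm cover_l]].
  exists (U0 :: m). split.
  - intros U [<- | HU]; auto.
  - intros x. destruct (classic (U0 x)) as [U0x | nU0x].
    + exists U0. split; [left|]; auto.
    + destruct (cover_l x (Hl x nU0x)) as [U [HU Ux]].
      exists U. split; [right|]; auto.
Qed.

Lemma root_clopen_of_cofinite (U : set (option X)) :
  U None -> cofinite U -> clopen (@root_open X) U.
Proof.
  intros UN cofU. split; [right; exact cofU | left; auto].
Qed.

Lemma root_clopen_of_finite (U : set (option X)) :
  ~ U None -> finite_set U -> clopen (@root_open X) U.
Proof.
  intros nUN finU. split; [left; exact nUN | right].
  apply (finite_set_mono _ U); [|exact finU]. intros x nnUx. now apply NNPP.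
Qed.

Lemma cofinite_root_downset (x : X) :
  cofinite (downset le x) -> cofinite (fun b => root_le le b (Some x)).
Proof.
  intros [l Hl]. exists (None :: map Some l).
  intros [y|] Hy; simpl in Hy.
  - right. apply in_map, Hl, Hy.
  - exfalso. apply Hy. exact I.
Qed.

Lemma finite_root_upset (x : X) :
  is_partial_order le -> cofinite (downset le x) ->
  finite_set (root_le le (Some x)).
Proof.
  intros [_ [antisym _]] [l Hl]. exists (Some x :: map Some l).
  intros [z|] Hxz; [|contradiction]. simpl in Hxz.
  destruct (classic (le z x)) as [Hzx | Hzx].
  - left. f_equal. auto.
  - right. apply in_map, Hl, Hzx.
Qed.

Lemma cofinite_root_down (U : set (option X)) (a : option X) :
  (forall x, le x x) -> (forall x, cofinite (downset le x)) ->
  root_open U -> U a -> cofinite (down (root_le le) U).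
Proof.
  intros refl cof_down openU Ua. destruct a as [x|].
  - apply (cofinite_mono (fun b => root_le le b (Some x))).
    + intros b Hb. exists (Some x). auto.
    + apply cofinite_root_downset, cof_down.
  - destruct openU as [nUN | cofU]; [contradiction|].
    apply (cofinite_mono U); [|exact cofU].
    intros b Ub. exists b. split; [exact Ub | destruct b; simpl; auto].
Qed.

Lemma root_clopen_down (U : set (option X)) :
  (forall x, le x x) -> (forall x, cofinite (downset le x)) -> root_open U ->
  clopen (@root_open X) (down (root_le le) U).
Proof.
  intros refl cof_down openU. destruct (classic (exists a, U a)) as [[a Ua] | empty].
  - apply root_clopen_of_cofinite.
    + exists a. split; [exact Ua | exact I].
    + exact (cofinite_root_down U a refl cof_down openU Ua).
  - apply root_clopen_of_finite.
    + intros [a [Ua _]]. apply empty. eauto.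
    + exists nil. intros b [a [Ua _]]. apply empty. eauto.
Qed.

Lemma root_priestley_separation (a b : option X) :
  is_partial_order le -> (forall x, cofinite (downset le x)) ->
  ~ root_le le a b ->
  exists U, clopen (@root_open X) U /\ is_upset (root_le le) U /\ U a /\ ~ U b.
Proof.
  intros po cof_down nab. destruct a as [x|]; [|exfalso; apply nab; exact I].
  exists (root_le le (Some x)). split; [|split; [|split]].
  - apply root_clopen_of_finite; [simpl; auto|].
    apply finite_root_upset; auto.
  - destruct (root_le_partial_order po) as [_ [_ trans]].
    intros c d. apply trans.
  - destruct po as [refl _]. exact (refl x).
  - exact nab.
Qed.

End RootCompactification.

Theorem mainTheorem3 (X : Type) (le : X -> X -> Prop) :
  is_partial_order le ->
  (forall x : X, cofinite (downset le x)) ->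
  esakia_space (@root_open X) (root_le le).
Proof.
  intros po cof_down.
  split; [exact (root_open_topology X)|].
  split; [exact (root_le_partial_order X le po)|].
  split; [exact (root_open_compact X)|].
  split.
  - intros U [openU _].
    exact (root_clopen_down X le U (proj1 po) cof_down openU).
  - intros a b. exact (root_priestley_separation X le a b po cof_down).
Qed.
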